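(* Let $m\ge2$, $a\in(0,1/m)$, and $\Sigma=\Sigma_{HC}^+=\mathrm{cl}(\pi_a(X_a))\subset\{1,\ldots,2m\}^{\mathbb Z^+}$. The set of vertices of the follower set graph of $\Sigma$ is $\{\Theta^\xi:\xi \text{ a finite word (possibly empty) over }\{1,\ldots,m\}\}$, and the labeled edges of the graph are exactly: $\Theta^\xi\xrightarrow{i}\Theta^{\xi i}$ and $\Theta^{\xi i}\xrightarrow{i+m}\Theta^\xi$ for every finite word $\xi$ over $\{1,\ldots,m\}$ and every $i\in\{1,\ldots,m\}$; and $\Theta^\emptyset\xrightarrow{i}\Theta^\emptyset$ for every $i\in\{m+1,\ldots,2m\}$.
   Context: $F_a(x)=\frac{x-(i-1)a}{a}$ on $[(i-1)a,ia)$, $i\in\{1,\ldots,m\}$, and $F_a(x)=\frac{x-ma}{1-ma}$ on $[ma,1]$. $\Omega_i^+=[(i-1)a,ia)\times[0,1]$ for $i\le m$; $\Omega_i^+=[ma,1]\times[\frac{i-m-1}{m},\frac{i-m}{m})$ for $m+1\le i\le 2m-1$; $\Omega_{2m}^+=[ma,1]\times[\frac{m-1}{m},1]$. $f_a(x,y)=(F_a(x),\frac{y}{m}+\frac{i-1}{m})$ on $\Omega_i^+$ for $i\le m$, $f_a(x,y)=(F_a(x),my-i+m+1)$ on $\Omega_i^+$ for $i\ge m+1$. $X_a=\bigcap_{n\ge0}f_a^{-n}(\bigcup_i\mathrm{int}(\Omega_i^+))$ and $\pi_a(p)=(\omega_n)_{n\ge0}$ where $f_a^n(p)\in\mathrm{int}(\Omega^+_{\omega_n})$;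 closure in the product topology. For a one-sided subshift $\Sigma$ on a finite set $S$, $L(\Sigma)$ is the set of finite words (including the empty word $\emptyset$, with $\emptyset\xi=\xi\emptyset=\xi$) appearing in elements of $\Sigma$. For $\xi\in L(\Sigma)$ the follower set is $\Theta^\xi=\{\eta\in\Sigma:\xi\eta\in\Sigma\}$. The follower set graph of $\Sigma$ is the $S$-labeled directed graph whose vertices are the follower sets (as subsets of $\Sigma$), with a $\gamma$-labeled edge $\Theta^\xi\xrightarrow{\gamma}\Theta^\eta$ if and only if $\xi\gamma\in L(\Sigma)$ and $\Theta^\eta=\Theta^{\xi\gamma}$. *)

From Stdlib Require Import Reals Lra Lia ZArith Arith List.
Open Scope R_scope.

Definition pt := (R * R)%type.

(** Index i of the half-open piece Omega_i^+ containing p = (x,y) in [0,1]^2.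
    For x in [(i-1)a, ia) (i <= m), floor(x/a) = i-1.
    For x in [ma,1] the index is m+1+j where j = min(floor(m y), m-1), i.e.
    y in [j/m,(j+1)/m) for j <= m-2 and y in [(m-1)/m,1] for j = m-1. *)
Definition piece_idx (m : nat) (a : R) (p : pt) : nat :=
  let (x, y) := p in
  if Rlt_dec x (INR m * a) then (Z.to_nat (Int_part (x / a)) + 1)%nat
  else (m + 1 + Nat.min (Z.to_nat (Int_part (INR m * y))) (m - 1))%nat.

Definition fa_piece (m : nat) (a : R) (i : nat) (p : pt) : pt :=
  let (x, y) := p in
  if (i <=? m)%nat then
    ((x - INR (i - 1) * a) / a, y / INR m + INR (i - 1) / INR m)
  else
    ((x - INR m * a) / (1 - INR m * a), INR m * y - INR i + INR m + 1).

Definition fa (m : nat) (a : R) (p : pt) : pt :=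
  fa_piece m a (piece_idx m a p) p.

Definition in_int_Omega (m : nat) (a : R) (i : nat) (p : pt) : Prop :=
  let (x, y) := p in
  ((1 <= i <= m)%nat /\ INR (i - 1) * a < x < INR i * a /\ 0 < y < 1)
  \/
  ((m + 1 <= i <= 2 * m)%nat /\ INR m * a < x < 1 /\
     INR (i - m - 1) / INR m < y < INR (i - m) / INR m).

(** One-sided sequences over the alphabet {1,...,2m} are modelled as nat -> nat. *)
Definition sequence := nat -> nat.

(** [codes m a p w] : p is in X_a and pi_a(p) = w, i.e.
    f_a^n(p) lies in int(Omega^+_{w n}) for every n >= 0. *)
Definition codes (m : nat) (a : R) (p : pt) (w : sequence) : Prop :=
  forall n : nat, in_int_Omega m a (w n) (Nat.iter n (fa m a) p).

Definition X_a (m : nat) (a : R) (p : pt) : Prop :=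
  forall n : nat, exists i : nat, (1 <= i <= 2 * m)%nat /\
    in_int_Omega m a i (Nat.iter n (fa m a) p).

Definition pi_image (m : nat) (a : R) (w : sequence) : Prop :=
  exists p : pt, X_a m a p /\ codes m a p w.

(** Closure in the product topology of {1..2m}^N (discrete factors):
    every cylinder [w_0 ... w_{N-1}] around w meets the set. *)
Definition closure_prod (S : sequence -> Prop) (w : sequence) : Prop :=
  forall N : nat, exists s : sequence, S s /\ forall n, (n < N)%nat -> s n = w n.

Definition Sigma_HC (m : nat) (a : R) : sequence -> Prop :=
  closure_prod (pi_image m a).

Definition word := list nat.

Definition cat_ws (xi : word) (eta : sequence) : sequence :=
  fun n => if (n <? length xi)%nat then nth n xi 0%nat else eta (n - length xi)%nat.

Definition lang (S : sequence -> Prop) (xi : word) : Prop :=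
  exists w : sequence, S w /\ exists k : nat,
    forall j, (j < length xi)%nat -> w (k + j)%nat = nth j xi 0%nat.

Definition follower (S : sequence -> Prop) (xi : word) : sequence -> Prop :=
  fun eta => S eta /\ S (cat_ws xi eta).

Definition set_eq (A B : sequence -> Prop) : Prop := forall w, A w <-> B w.

Definition fsg_vertex (S : sequence -> Prop) (A : sequence -> Prop) : Prop :=
  exists xi : word, lang S xi /\ set_eq A (follower S xi).

Definition fsg_edge (S : sequence -> Prop) (A : sequence -> Prop) (gamma : nat)
    (B : sequence -> Prop) : Prop :=
  exists xi : word, lang S xi /\ set_eq A (follower S xi) /\
    lang S (xi ++ gamma :: nil) /\ set_eq B (follower S (xi ++ gamma :: nil)).

Definition word_over_m (m : nat) (xi : word) : Prop :=
  Forall (fun s => (1 <= s <= m)%nat) xi.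

From Stdlib Require Import Reals ZArith List Lia Lra Setoid.
Import ListNotations.
Local Open Scope nat_scope.

(* Reading the y-coordinate in base m turns Sigma into a stack language: on
   Omega_i (i <= m) the map f_a writes the digit i-1 in front of the expansion
   of y, and on Omega_(m+i) it erases the leading digit, which must be i-1.
   Hence a sequence is the code of a point iff, read with a stack, each pop
   letter m+i finds i-1 on top or finds the stack empty (it then erases a digit
   of the initial y that no push has covered).  Conversely every prefix of such
   a sequence is realized: x runs backwards through inverse branches of F_a, and
   y encodes the stack padded with the digits popped from the empty stack.  So
   the follower set of a word only depends on the stack it leaves, every stack
   is left by a word over {1..m}, and the edges are the pushes, the pops of the
   top digit, and the pops of the empty stack. *)

Definition letter (m s : nat) : Prop := 1 <= s <= 2 * m.

Definition digits (m : nat) (st : list nat) : Prop := Forall (fun d => d < m) st.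

Definition step (lenient : bool) (m : nat) (st : list nat) (s : nat) : option (list nat) :=
  if s <=? m then Some (s - 1 :: st) else
  match st with
  | [] => if lenient then Some [] else None
  | d :: st' => if d =? s - m - 1 then Some st' else None
  end.

Fixpoint run (lenient : bool) (m : nat) (st : list nat) (v : word) : option (list nat) :=
  match v with
  | [] => Some st
  | s :: v' => match step lenient m st s with
               | Some st' => run lenient m st' v'
               | None => None
               end
  end.

Definition pref (w : sequence) (n : nat) : word := map w (seq 0 n).

Definition accepts_from (m : nat) (st : list nat) (w : sequence) : Prop :=
  forall n, run true m st (pref w n) <> None.

Definition stack_shift (m : nat) (w : sequence) : Prop :=
  (forall n, letter m (w n)) /\ accepts_from m [] w.

Definition stack_follower (m : nat) (st : list nat) : sequence -> Prop :=
  fun eta => stack_shift m eta /\ accepts_from m st eta.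

Definition word_of_stack (st : list nat) : word := rev (map S st).

Lemma word_over_letters m xi : word_over_m m xi -> Forall (letter m) xi.
Proof. apply Forall_impl; unfold letter; lia. Qed.

Lemma run_app b m st u v :
  run b m st (u ++ v) =
  match run b m st u with Some st' => run b m st' v | None => None end.
Proof.
  revert st; induction u as [|s u IH]; intro st; simpl; auto.
  destruct (step b m st s); auto.
Qed.

Lemma run_push b m st xi :
  word_over_m m xi -> run b m st xi = Some (rev (map pred xi) ++ st).
Proof.
  intro Hxi; revert st; induction Hxi as [|s xi Hs _ IH]; intro st; auto.
  simpl; unfold step; rewrite (proj2 (Nat.leb_le s m)) by lia.
  rewrite IH, <- app_assoc; simpl; do 3 f_equal; lia.
Qed.

Lemma run_push_pop b m st i : 1 <= i <= m -> run b m st [i; i + m] = Some st.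
Proof.
  intro Hi; simpl; unfold step.
  rewrite (proj2 (Nat.leb_le i m)), (proj2 (Nat.leb_gt (i + m) m)),
    (proj2 (Nat.eqb_eq (i - 1) (i + m - m - 1))) by lia.
  reflexivity.
Qed.

Lemma step_lenient_inv m st s st' :
  step true m st s = Some st' ->
  (s <= m /\ st' = s - 1 :: st) \/ (m < s /\ st = [] /\ st' = []) \/
  (m < s /\ st = s - m - 1 :: st').
Proof.
  unfold step; destruct (Nat.leb_spec s m) as [Hs|Hs]; intro E.
  - left; injection E; auto.
  - right; destruct st as [|d st0].
    + left; injection E; auto.
    + right; destruct (Nat.eqb_spec d (s - m - 1)); [|discriminate].
      injection E; intros; subst; auto.
Qed.

Lemma step_strict_inv m st s st' :
  step false m st s = Some st' ->
  (s <= m /\ st' = s - 1 :: st) \/ (m < s /\ st = s - m - 1 :: st').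
Proof.
  unfold step; destruct (Nat.leb_spec s m) as [Hs|Hs]; intro E.
  - left; injection E; auto.
  - right; destruct st as [|d st0]; [discriminate|].
    destruct (Nat.eqb_spec d (s - m - 1)); [|discriminate].
    injection E; intros; subst; auto.
Qed.

Lemma run_lenient_app_stack m st0 st v :
  run true m (st0 ++ st) v <> None -> run true m st0 v <> None.
Proof.
  revert st0 st; induction v as [|s v IH]; intros st0 st; simpl; [congruence|].
  unfold step; destruct (s <=? m); [apply (IH (_ :: st0))|].
  destruct st0 as [|d st0], st as [|e st]; simpl; auto.
  - destruct (e =? s - m - 1); [apply (IH [] st)|congruence].
  - destruct (d =? s - m - 1); [apply IH|congruence].
  - destruct (d =? s - m - 1); [apply IH|congruence].
Qed.

Lemma run_digits b m st v r :
  Forall (letter m) v -> digits m st -> run b m st v = Some r -> digits m r.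
Proof.
  intro Hv; revert st; induction Hv as [|s v Hs _ IH]; intros st Hst E; simpl in E.
  - congruence.
  - unfold letter, step in *; destruct (Nat.leb_spec s m).
    + apply (IH (s - 1 :: st)); [constructor; [lia|exact Hst]|exact E].
    + destruct st as [|d st0]; [destruct b; [apply (IH _ Hst E)|discriminate]|].
      destruct (d =? s - m - 1); [|discriminate].
      inversion Hst as [|? ? _ Hst0]; exact (IH _ Hst0 E).
Qed.

(* [F] lists the digits that the lenient machine pops from the empty stack. *)
Lemma run_strict_extend m v st r :
  Forall (letter m) v -> run true m st v = Some r ->
  exists F, digits m F /\ run false m (st ++ F) v <> None.
Proof.
  intro Hv; revert st; induction Hv as [|s v Hs _ IH]; intros st E.
  { exists []; split; [constructor|discriminate]. }
  simpl in E |- *; unfold letter, step in *; destruct (Nat.leb_spec s m).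
  - apply (IH _ E).
  - destruct st as [|d st0].
    + destruct (IH _ E) as [F [HF HR]].
      exists (s - m - 1 :: F); split; [constructor; auto; lia|].
      simpl; rewrite Nat.eqb_refl; exact HR.
    + destruct (Nat.eqb_spec d (s - m - 1)) as [->|]; [|discriminate].
      destruct (IH _ E) as [F [HF HR]]; exists F; split; auto.
      simpl; rewrite Nat.eqb_refl; exact HR.
Qed.

Lemma word_of_stack_cons d st : word_of_stack (d :: st) = word_of_stack st ++ [S d].
Proof. reflexivity. Qed.

Lemma word_of_stack_over m st : digits m st -> word_over_m m (word_of_stack st).
Proof.
  intro H; apply Forall_rev, Forall_map.
  eapply Forall_impl; [|exact H]; simpl; lia.
Qed.

Lemma run_word_of_stack b m st : digits m st -> run b m [] (word_of_stack st) = Some st.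
Proof.
  intro H; rewrite run_push by (apply word_of_stack_over; auto).
  unfold word_of_stack; rewrite map_rev, rev_involutive, map_map, app_nil_r.
  simpl; rewrite map_id; reflexivity.
Qed.

Lemma nth_pref w n i : i < n -> nth i (pref w n) 0 = w i.
Proof.
  intro Hi; unfold pref.
  rewrite (nth_indep _ 0 (w 0)) by (rewrite length_map, length_seq; auto).
  rewrite map_nth, seq_nth; auto.
Qed.

Lemma length_pref w n : length (pref w n) = n.
Proof. unfold pref; rewrite length_map, length_seq; reflexivity. Qed.

Lemma pref_S w n : pref w (S n) = pref w n ++ [w n].
Proof. unfold pref; rewrite seq_S, map_app; reflexivity. Qed.

Lemma pref_add w n k : pref w (n + k) = pref w n ++ map w (seq n k).
Proof. unfold pref; rewrite seq_app, map_app; reflexivity. Qed.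

Lemma Forall_pref (P : nat -> Prop) w n : (forall i, P (w i)) -> Forall P (pref w n).
Proof. intro H; apply Forall_map, Forall_forall; auto. Qed.

Lemma cat_ws_l xi eta n : n < length xi -> cat_ws xi eta n = nth n xi 0.
Proof. intro H; unfold cat_ws; rewrite (proj2 (Nat.ltb_lt _ _) H); reflexivity. Qed.

Lemma cat_ws_r xi eta n : cat_ws xi eta (length xi + n) = eta n.
Proof.
  unfold cat_ws; rewrite (proj2 (Nat.ltb_ge _ _)) by lia; f_equal; lia.
Qed.

Lemma pref_cat xi eta k : pref (cat_ws xi eta) (length xi + k) = xi ++ pref eta k.
Proof.
  apply nth_ext with 0 0; [rewrite length_app, !length_pref; reflexivity|].
  rewrite length_pref; intros i Hi; rewrite nth_pref by auto.
  destruct (Nat.lt_ge_cases i (length xi)).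
  - rewrite app_nth1, cat_ws_l; auto.
  - rewrite app_nth2, nth_pref by lia.
    replace i with (length xi + (i - length xi)) at 1 by lia; apply cat_ws_r.
Qed.

Lemma map_seq_occurrence w z k :
  (forall j, j < length z -> w (k + j) = nth j z 0) -> map w (seq k (length z)) = z.
Proof.
  intro H; apply nth_ext with 0 0; [rewrite length_map, length_seq; auto|].
  rewrite length_map, length_seq; intros j Hj.
  rewrite (nth_indep _ 0 (w 0)) by (rewrite length_map, length_seq; auto).
  rewrite map_nth, seq_nth; auto.
Qed.

Lemma letters_cat m xi eta :
  (forall n, letter m (cat_ws xi eta n)) <->
  Forall (letter m) xi /\ forall n, letter m (eta n).
Proof.
  split.
  - intro H; split.
    + apply Forall_nth; intros i d Hi.
      rewrite nth_indep with (d' := 0), <- cat_ws_l with (eta := eta); auto.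
    + intro n; rewrite <- cat_ws_r with (xi := xi); auto.
  - intros [Hxi Heta] n; destruct (Nat.lt_ge_cases n (length xi)).
    + rewrite cat_ws_l; auto; apply Forall_nth; auto.
    + replace n with (length xi + (n - length xi)) by lia; rewrite cat_ws_r; auto.
Qed.

Lemma run_pref_mono b m st w n N :
  n <= N -> run b m st (pref w N) <> None -> run b m st (pref w n) <> None.
Proof.
  intro HnN; replace N with (n + (N - n)) by lia.
  rewrite pref_add, run_app; destruct (run b m st (pref w n)); congruence.
Qed.

Lemma accepts_from_cat m st xi eta :
  accepts_from m st (cat_ws xi eta) <->
  exists st', run true m st xi = Some st' /\ accepts_from m st' eta.
Proof.
  split.
  - intro H; pose proof (H (length xi + 0)) as H0.
    rewrite pref_cat, run_app in H0.
    destruct (run true m st xi) as [st'|] eqn:E; [|congruence].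
    exists st'; split; auto; intro k.
    specialize (H (length xi + k)); rewrite pref_cat, run_app, E in H; exact H.
  - intros [st' [E H]] n; apply (run_pref_mono _ _ _ _ _ (length xi + n)); [lia|].
    rewrite pref_cat, run_app, E; apply H.
Qed.

Lemma accepts_from_push m st : 0 < m -> accepts_from m st (fun _ => 1).
Proof.
  intros Hm n; rewrite run_push; [discriminate|].
  apply Forall_pref; lia.
Qed.

Lemma run_trajectory b m s st0 :
  (forall n, run b m st0 (pref s n) <> None) ->
  exists L, L 0 = st0 /\ forall n, step b m (L n) (s n) = Some (L (S n)).
Proof.
  intro Hrun; exists (fun n => match run b m st0 (pref s n) with Some st => st | None => [] end).
  split; [reflexivity|intro n].
  specialize (Hrun (S n)); rewrite pref_S, run_app in Hrun |- *.
  destruct (run b m st0 (pref s n)) as [st|]; [|congruence]; simpl in *.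
  destruct (step b m st (s n)); congruence.
Qed.

#[local] Instance set_eq_equiv : Equivalence set_eq.
Proof.
  split; intros A; unfold set_eq; [tauto|firstorder|intros B C HAB HBC w; rewrite HAB; auto].
Qed.

Definition listed_edge (m : nat) (Sigma : sequence -> Prop)
    (A : sequence -> Prop) (gamma : nat) (B : sequence -> Prop) : Prop :=
  (exists xi i, word_over_m m xi /\ 1 <= i <= m /\ gamma = i /\
     set_eq A (follower Sigma xi) /\ set_eq B (follower Sigma (xi ++ [i]))) \/
  (exists xi i, word_over_m m xi /\ 1 <= i <= m /\ gamma = i + m /\
     set_eq A (follower Sigma (xi ++ [i])) /\ set_eq B (follower Sigma xi)) \/
  (m + 1 <= gamma <= 2 * m /\
     set_eq A (follower Sigma []) /\ set_eq B (follower Sigma [])).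

Section FollowerSetGraph.

Variable m : nat.
Hypothesis m_gt0 : 0 < m.
Variable Sigma : sequence -> Prop.
Hypothesis Sigma_eq : forall w, Sigma w <-> stack_shift m w.

Lemma lang_iff z : lang Sigma z <-> Forall (letter m) z /\ run true m [] z <> None.
Proof.
  split.
  - intros [w [[Hw Hacc]%Sigma_eq [k Hk]]].
    rewrite <- (map_seq_occurrence w z k Hk); split; [apply Forall_map, Forall_forall; auto|].
    specialize (Hacc (k + length z)); rewrite pref_add, run_app in Hacc.
    destruct (run true m [] (pref w k)) as [st|]; [|congruence].
    apply (run_lenient_app_stack m [] st); exact Hacc.
  - intros [Hz Hrun]; exists (cat_ws z (fun _ => 1)); split.
    + apply Sigma_eq; split.
      * apply letters_cat; split; auto; intro; unfold letter; lia.
      * apply accepts_from_cat; destruct (run true m [] z) as [st|]; [|congruence].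
        exists st; split; auto; apply accepts_from_push; auto.
    + exists 0; intros j Hj; apply cat_ws_l; auto.
Qed.

Lemma follower_iff z st :
  Forall (letter m) z -> run true m [] z = Some st ->
  set_eq (follower Sigma z) (stack_follower m st).
Proof.
  intros Hz E eta; unfold follower, stack_follower; rewrite !Sigma_eq.
  unfold stack_shift; rewrite letters_cat, accepts_from_cat, E.
  split; [intros [? [? [? [[= <-] ?]]]]|intros [[? ?] ?]]; eauto 7.
Qed.

Lemma lang_word_over xi : word_over_m m xi -> lang Sigma xi.
Proof.
  intro Hxi; apply lang_iff; split.
  - apply word_over_letters; auto.
  - rewrite run_push; auto; discriminate.
Qed.

Lemma follower_word_of_stack st :
  digits m st -> set_eq (follower Sigma (word_of_stack st)) (stack_follower m st).
Proof.
  intro Hst; apply follower_iff;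
    [apply word_over_letters, word_of_stack_over | apply run_word_of_stack]; auto.
Qed.

Lemma lang_stack z :
  lang Sigma z -> exists st, digits m st /\ run true m [] z = Some st /\
    set_eq (follower Sigma z) (stack_follower m st).
Proof.
  intros [Hz Hrun]%lang_iff.
  destruct (run true m [] z) as [st|] eqn:E; [|congruence].
  exists st; split; [apply (run_digits _ _ _ _ _ Hz (Forall_nil _) E)|].
  split; [reflexivity|apply follower_iff; auto].
Qed.

Lemma fsg_vertex_iff A :
  fsg_vertex Sigma A <-> exists xi, word_over_m m xi /\ set_eq A (follower Sigma xi).
Proof.
  split.
  - intros [z [Hz HA]]; destruct (lang_stack z Hz) as [st [Hst [_ Hfol]]].
    exists (word_of_stack st); split; [apply word_of_stack_over; auto|].
    rewrite HA, Hfol, follower_word_of_stack; [reflexivity|auto].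
  - intros [xi [Hxi HA]]; exists xi; split; auto; apply lang_word_over; auto.
Qed.

Lemma fsg_edge_listed A gamma B : fsg_edge Sigma A gamma B -> listed_edge m Sigma A gamma B.
Proof.
  intros [z [Hz [HA [Hzg HB]]]].
  destruct (lang_stack z Hz) as [st [Hst [E HAst]]].
  destruct (lang_stack _ Hzg) as [st' [Hst' [E' HBst]]].
  assert (Hg : letter m gamma)
    by (apply lang_iff, proj1, Forall_app in Hzg; destruct Hzg as [_ Hg]; inversion Hg; auto).
  unfold letter in Hg.
  assert (Estep : step true m st gamma = Some st')
    by (rewrite run_app, E in E'; simpl in E'; destruct (step true m st gamma); congruence).
  rewrite HAst in HA; rewrite HBst in HB.
  destruct (step_lenient_inv _ _ _ _ Estep) as [[Hle ->]|[[Hlt [-> ->]]|[Hlt ->]]].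
  - left; exists (word_of_stack st), gamma.
    split; [apply word_of_stack_over; auto|]; split; [lia|]; split; auto.
    replace (word_of_stack st ++ [gamma]) with (word_of_stack (gamma - 1 :: st))
      by (rewrite word_of_stack_cons; do 3 f_equal; lia).
    rewrite !follower_word_of_stack; auto.
  - right; right; split; [lia|].
    rewrite <- (follower_word_of_stack []) in HA, HB by constructor; auto.
  - right; left; exists (word_of_stack st'), (gamma - m).
    split; [apply word_of_stack_over; auto|]; split; [lia|]; split; [lia|].
    replace (word_of_stack st' ++ [gamma - m]) with (word_of_stack (gamma - m - 1 :: st'))
      by (rewrite word_of_stack_cons; do 3 f_equal; lia).
    rewrite !follower_word_of_stack; auto.
Qed.

Lemma fsg_edge_of_listed A gamma B : listed_edge m Sigma A gamma B -> fsg_edge Sigma A gamma B.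
Proof.
  assert (over_snoc : forall xi i, word_over_m m xi -> 1 <= i <= m -> word_over_m m (xi ++ [i]))
    by (intros; apply Forall_app; split; auto).
  intros [[xi [i [Hxi [Hi [-> [HA HB]]]]]] | [[xi [i [Hxi [Hi [-> [HA HB]]]]]] |
    [Hg [HA HB]]]].
  - exists xi; split; [apply lang_word_over; auto|]; split; [exact HA|].
    split; [apply lang_word_over, over_snoc|exact HB]; auto.
  - assert (Hz : Forall (letter m) ((xi ++ [i]) ++ [i + m])).
    { rewrite <- app_assoc; apply Forall_app; split; [apply word_over_letters; auto|].
      repeat constructor; unfold letter; lia. }
    assert (Erun : run true m [] ((xi ++ [i]) ++ [i + m]) = Some (rev (map pred xi)))
      by (rewrite <- app_assoc, run_app, run_push by auto; cbn [app];
          rewrite run_push_pop, app_nil_r; auto).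
    exists (xi ++ [i]); split; [apply lang_word_over, over_snoc; auto|]; split; [exact HA|].
    split; [apply lang_iff; rewrite Erun; split; [auto|discriminate]|].
    rewrite HB, (follower_iff _ _ Hz Erun).
    apply follower_iff; [apply word_over_letters; auto|rewrite run_push, app_nil_r; auto].
  - assert (Hg' : Forall (letter m) [gamma]) by (repeat constructor; unfold letter; lia).
    assert (Erun : run true m [] [gamma] = Some []).
    { simpl; unfold step; rewrite (proj2 (Nat.leb_gt gamma m)); auto; lia. }
    exists []; split; [apply lang_word_over; constructor|]; split; [exact HA|]; cbn [app].
    split; [apply lang_iff; rewrite Erun; split; [auto|discriminate]|].
    rewrite HB, (follower_iff [] []), (follower_iff [gamma] []); auto; reflexivity.
Qed.

Lemma fsg_edge_iff A gamma B : fsg_edge Sigma A gamma B <-> listed_edge m Sigma A gamma B.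
Proof. split; [apply fsg_edge_listed|apply fsg_edge_of_listed]. Qed.

End FollowerSetGraph.

Local Open Scope R_scope.

Lemma Rdiv_lt_iff x y c : 0 < c -> (x / c < y <-> x < y * c).
Proof.
  intro Hc; split; intro H.
  - replace x with (x / c * c) by (field; lra); apply Rmult_lt_compat_r; auto.
  - apply Rmult_lt_reg_r with c; auto; replace (x / c * c) with x by (field; lra); auto.
Qed.

Lemma Rlt_div_iff x y c : 0 < c -> (x < y / c <-> x * c < y).
Proof.
  intro Hc; split; intro H.
  - replace y with (y / c * c) by (field; lra); apply Rmult_lt_compat_r; auto.
  - apply Rmult_lt_reg_r with c; auto; replace (y / c * c) with y by (field; lra); auto.
Qed.

Lemma Int_part_INR (r : R) (k : nat) : INR k < r < INR k + 1 -> Int_part r = Z.of_nat k.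
Proof.
  intro H; unfold Int_part.
  rewrite <- (tech_up r (Z.of_nat (S k))); [lia| |];
    rewrite <- INR_IZR_INZ, S_INR; lra.
Qed.

Lemma INR_pred_succ k : (1 <= k)%nat -> INR k = INR (k - 1) + 1.
Proof. intro Hk; rewrite <- S_INR; f_equal; lia. Qed.

(* The stack [[d_1; ...; d_k]] (top first) followed by the tail [z] is stored
   as the base-[m] expansion [0.d_1 ... d_k] plus [z / m^k]. *)
Definition encode (m : nat) (st : list nat) (z : R) : R :=
  fold_right (fun d acc => (INR d + acc) / INR m) z st.

Lemma encode_bounds m st z :
  (0 < m)%nat -> 0 < z < 1 -> digits m st -> 0 < encode m st z < 1.
Proof.
  intros Hm Hz Hst; induction Hst as [|d st Hd _ IH]; simpl; auto.
  assert (0 < INR m) by (apply lt_0_INR; lia).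
  assert (INR d + 1 <= INR m) by (rewrite <- S_INR; apply le_INR; lia).
  pose proof (pos_INR d).
  split; [apply Rdiv_lt_0_compat|apply Rdiv_lt_iff]; lra.
Qed.

Section Dynamics.

Variables (m : nat) (a : R).
Hypothesis m_ge2 : (2 <= m)%nat.
Hypothesis a_pos : 0 < a.
Hypothesis a_lt : a < 1 / INR m.

Lemma INR_m_pos : 0 < INR m.
Proof. apply lt_0_INR; lia. Qed.

Lemma ma_lt1 : INR m * a < 1.
Proof. pose proof INR_m_pos; apply Rlt_div_iff in a_lt; lra. Qed.

Lemma int_Omega_letter s x y :
  in_int_Omega m a s (x, y) -> letter m s /\ 0 < y < 1.
Proof.
  pose proof INR_m_pos; unfold letter.
  intros [[Hs [_ Hy]]|[Hs [_ [Hy1 Hy2]]]]; [split; [lia|lra]|split; [lia|]].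
  apply Rdiv_lt_iff in Hy1; auto; apply Rlt_div_iff in Hy2; auto.
  pose proof (pos_INR (s - m - 1)); assert (INR (s - m) <= INR m) by (apply le_INR; lia).
  split; nra.
Qed.

Lemma int_Omega_pop_digit s x y :
  in_int_Omega m a s (x, y) -> (m < s)%nat ->
  INR (s - m - 1) < y * INR m < INR (s - m - 1) + 1.
Proof.
  pose proof INR_m_pos; intros [[Hs _]|[Hs [_ [Hy1 Hy2]]]] Hl; [lia|].
  apply Rdiv_lt_iff in Hy1; apply Rlt_div_iff in Hy2; auto.
  rewrite (INR_pred_succ (s - m)) in Hy2 by lia; lra.
Qed.

Lemma fa_int s x y : in_int_Omega m a s (x, y) -> fa m a (x, y) = fa_piece m a s (x, y).
Proof.
  pose proof INR_m_pos; intro Hint; unfold fa; f_equal; simpl.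
  destruct Hint as [[Hs [Hx Hy]]|[Hs [Hx Hy]]].
  - destruct (Rlt_dec x (INR m * a)) as [_|C].
    + rewrite (Int_part_INR (x / a) (s - 1)); [lia|].
      rewrite (INR_pred_succ s) in Hx by lia.
      split; [apply Rlt_div_iff|apply Rdiv_lt_iff]; lra.
    + exfalso; apply C; assert (INR s <= INR m) by (apply le_INR; lia); nra.
  - destruct (Rlt_dec x (INR m * a)); [lra|].
    rewrite (Int_part_INR (INR m * y) (s - m - 1)); [lia|].
    rewrite Rmult_comm; apply (int_Omega_pop_digit s x); [right|lia]; auto.
Qed.

Definition Finv (s : nat) (x : R) : R :=
  if (s <=? m)%nat then INR (s - 1) * a + a * x else INR m * a + (1 - INR m * a) * x.

Lemma Finv_bounds s x : letter m s -> 0 < x < 1 -> 0 < Finv s x < 1.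
Proof.
  unfold letter, Finv; intros Hs Hx; pose proof ma_lt1; pose proof INR_m_pos.
  destruct (Nat.leb_spec s m); [|split; nra].
  pose proof (pos_INR (s - 1)).
  assert (INR (s - 1) + 1 <= INR m) by (rewrite <- INR_pred_succ by lia; apply le_INR; lia).
  split; nra.
Qed.

Lemma fa_push_branch s x y :
  (1 <= s <= m)%nat -> 0 < x < 1 -> 0 < y < 1 ->
  in_int_Omega m a s (Finv s x, y) /\ fa m a (Finv s x, y) = (x, encode m [s - 1]%nat y).
Proof.
  intros Hs Hx Hy; pose proof INR_m_pos; unfold Finv.
  destruct (Nat.leb_spec s m); [|lia].
  assert (Hint : in_int_Omega m a s (INR (s - 1) * a + a * x, y)).
  { left; rewrite (INR_pred_succ s) by lia; split; [lia|split; [split|]; nra]. }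
  split; auto; rewrite (fa_int _ _ _ Hint); simpl.
  destruct (Nat.leb_spec s m); [|lia]; f_equal; field; lra.
Qed.

Lemma fa_pop_branch s x y :
  (m + 1 <= s <= 2 * m)%nat -> 0 < x < 1 -> 0 < y < 1 ->
  in_int_Omega m a s (Finv s x, encode m [s - m - 1]%nat y) /\
  fa m a (Finv s x, encode m [s - m - 1]%nat y) = (x, y).
Proof.
  intros Hs Hx Hy; pose proof INR_m_pos; pose proof ma_lt1; unfold Finv.
  change (encode m [s - m - 1]%nat y) with ((INR (s - m - 1) + y) / INR m).
  destruct (Nat.leb_spec s m); [lia|].
  assert (Hint : in_int_Omega m a s
            (INR m * a + (1 - INR m * a) * x, (INR (s - m - 1) + y) / INR m)).
  { right; split; [lia|split; [split; nra|]].
    rewrite (INR_pred_succ (s - m)) by lia.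
    split; apply Rmult_lt_compat_r; try apply Rinv_0_lt_compat; lra. }
  split; auto; rewrite (fa_int _ _ _ Hint); simpl.
  destruct (Nat.leb_spec s m); [lia|]; f_equal; [field; lra|].
  rewrite !minus_INR by lia; simpl; field; lra.
Qed.

(* Along an orbit the y-coordinate encodes the stack of the lenient machine:
   a pop letter on an empty stack just discards the leading digit of the tail. *)
Lemma fa_stack_step s p st z :
  in_int_Omega m a s p -> digits m st -> 0 < z < 1 -> snd p = encode m st z ->
  exists st' z', step true m st s = Some st' /\ digits m st' /\ 0 < z' < 1 /\
    snd (fa m a p) = encode m st' z'.
Proof.
  destruct p as [x y]; intros Hint Hst Hz Hy; simpl in Hy; pose proof INR_m_pos.
  destruct (int_Omega_letter _ _ _ Hint) as [Hs Hy01]; unfold letter in Hs.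
  rewrite (fa_int _ _ _ Hint); unfold step, fa_piece; simpl.
  destruct (Nat.leb_spec s m).
  - exists (s - 1 :: st)%nat, z; split; auto; split; [constructor; auto; lia|].
    split; auto; rewrite Hy; simpl; field; lra.
  - pose proof (int_Omega_pop_digit _ _ _ Hint ltac:(lia)) as Hdig.
    assert (Hsnd : INR m * y - INR s + INR m + 1 = y * INR m - INR (s - m - 1))
      by (rewrite !minus_INR by lia; simpl; ring).
    rewrite Hsnd; destruct st as [|d st0].
    + exists [], (y * INR m - INR (s - m - 1)); repeat split; auto; try constructor; lra.
    + apply Forall_cons_iff in Hst as [Hd Hst0].
      pose proof (encode_bounds m st0 z ltac:(lia) Hz Hst0).
      simpl in Hy; rewrite Hy in Hdig |- *.
      replace ((INR d + encode m st0 z) / INR m * INR m) with (INR d + encode m st0 z)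
        in * by (field; lra).
      assert (Hd_eq : d = (s - m - 1)%nat).
      { apply Nat2Z.inj; rewrite <- !(Int_part_INR (INR d + encode m st0 z)); auto; lra. }
      rewrite Hd_eq, Nat.eqb_refl; exists st0, z; do 3 (split; auto); simpl; ring.
Qed.

Lemma pi_image_accepted s : pi_image m a s -> accepts_from m [] s.
Proof.
  intros [p [_ Hcode]].
  assert (Inv : forall n, exists st z, run true m [] (pref s n) = Some st /\ digits m st /\
            0 < z < 1 /\ snd (Nat.iter n (fa m a) p) = encode m st z).
  { induction n as [|n [st [z [E [Hst [Hz Hy]]]]]].
    - destruct p as [x y]; exists [], y; split; auto; split; [constructor|].
      split; [apply (int_Omega_letter (s 0%nat) x), (Hcode 0%nat)|reflexivity].
    - destruct (fa_stack_step _ _ _ _ (Hcode n) Hst Hz Hy) as [st' [z' [E' Hrest]]].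
      exists st', z'; rewrite pref_S, run_app, E; simpl; rewrite E'; auto. }
  intro n; destruct (Inv n) as [st [z [E _]]]; congruence.
Qed.

Lemma pi_image_of_orbit (s : sequence) (X : nat -> R) (L : nat -> list nat) :
  (forall n, letter m (s n)) -> (forall n, 0 < X n < 1) ->
  (forall n, X n = Finv (s n) (X (S n))) -> digits m (L 0%nat) ->
  (forall n, step false m (L n) (s n) = Some (L (S n))) ->
  pi_image m a s.
Proof.
  intros Hs HX HXrec HL0 HL.
  assert (HLd : forall n, digits m (L n)).
  { induction n as [|n IH]; auto.
    apply (run_digits false m (L n) [s n]); [constructor; [apply Hs|constructor]|auto|].
    cbn [run]; rewrite HL; reflexivity. }
  set (Y n := encode m (L n) (1 / 2)).
  assert (HY : forall n, 0 < Y n < 1) by (intro; apply encode_bounds; [lia|lra|auto]).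
  assert (Horbit : forall n,
    in_int_Omega m a (s n) (X n, Y n) /\ fa m a (X n, Y n) = (X (S n), Y (S n))).
  { intro n; rewrite (HXrec n); unfold Y; pose proof (Hs n) as Hsn; unfold letter in Hsn.
    destruct (step_strict_inv _ _ _ _ (HL n)) as [[Hle Hpush]|[Hlt Hpop]].
    - rewrite Hpush; apply fa_push_branch; [lia|apply HX|apply HY].
    - rewrite Hpop; apply fa_pop_branch; [lia|apply HX|apply HY]. }
  exists (X 0%nat, Y 0%nat).
  assert (Hiter : forall n, Nat.iter n (fa m a) (X 0%nat, Y 0%nat) = (X n, Y n)).
  { induction n as [|n IH]; auto; simpl; rewrite IH; apply Horbit. }
  split; intro n; rewrite Hiter; [exists (s n); split; [apply Hs|]|]; apply Horbit.
Qed.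

(* [a / (1 - a)] is the fixed point of [Finv 2] (that of [Finv 1] is [0]),
   whence the hypothesis [2 <= m]. *)
Lemma backward_orbit (s : sequence) (N : nat) :
  (forall n, letter m (s n)) -> (forall n, (N <= n)%nat -> s n = 2%nat) ->
  exists X : nat -> R, (forall n, 0 < X n < 1) /\ forall n, X n = Finv (s n) (X (S n)).
Proof.
  intros Hs Hs2; pose proof ma_lt1.
  assert (Ha2 : a < 1 / 2).
  { assert (2 <= INR m) by (replace 2 with (INR 2) by (simpl; lra); apply le_INR; auto); nra. }
  set (xs := a / (1 - a)).
  assert (Hxs : 0 < xs < 1)
    by (split; [apply Rdiv_lt_0_compat|apply Rdiv_lt_iff]; lra).
  exists (fun n => fold_right Finv xs (map s (seq n (N - n)))); split.
  - intro n; assert (Hl : Forall (letter m) (map s (seq n (N - n))))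
      by (apply Forall_map, Forall_forall; auto).
    induction Hl as [|k l Hk _ IH]; simpl; auto; apply Finv_bounds; auto.
  - intro n; destruct (Nat.lt_ge_cases n N).
    + replace (N - n)%nat with (S (N - S n)) by lia; reflexivity.
    + rewrite Hs2 by lia; replace (N - n)%nat with 0%nat by lia;
        replace (N - S n)%nat with 0%nat by lia; simpl.
      unfold Finv, xs; destruct (Nat.leb_spec 2 m); [simpl; field; lra|lia].
Qed.

Lemma stack_shift_Sigma_HC w : stack_shift m w -> Sigma_HC m a w.
Proof.
  intros [Hw Hacc] N.
  set (v := pref w N).
  assert (Hv : Forall (letter m) v) by (apply Forall_pref; auto).
  destruct (run true m [] v) as [st|] eqn:E; [|exfalso; exact (Hacc N E)].
  destruct (run_strict_extend m v [] st Hv E) as [F [HF HrunF]]; simpl in HrunF.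
  set (s := cat_ws v (fun _ => 2%nat)).
  assert (Hlen : length v = N) by apply length_pref.
  assert (Hs : forall n, letter m (s n))
    by (apply letters_cat; split; auto; intro; unfold letter; lia).
  assert (Hs2 : forall n, (N <= n)%nat -> s n = 2%nat).
  { intros n Hn; unfold s; replace n with (length v + (n - N))%nat by lia.
    apply (cat_ws_r v (fun _ => 2%nat)). }
  destruct (backward_orbit s N Hs Hs2) as [X [HX HXrec]].
  assert (Hstrict : forall n, run false m F (pref s n) <> None).
  { intro n; apply (run_pref_mono false m F s n (length v + n)); [lia|].
    unfold s; rewrite pref_cat, run_app.
    destruct (run false m F v) as [r|]; [|congruence].
    rewrite run_push; [discriminate|apply Forall_pref; lia]. }
  destruct (run_trajectory false m s F Hstrict) as [L [HL0 HL]].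
  exists s; split.
  - apply (pi_image_of_orbit s X L); auto; rewrite HL0; auto.
  - intros n Hn; unfold s; rewrite cat_ws_l by lia; unfold v; apply nth_pref; auto.
Qed.

Lemma Sigma_HC_stack_shift w : Sigma_HC m a w -> stack_shift m w.
Proof.
  intro Hw; split.
  - intro n; destruct (Hw (S n)) as [s [[p [_ Hcode]] Hagree]].
    rewrite <- (Hagree n) by lia; specialize (Hcode n).
    destruct (Nat.iter n (fa m a) p); apply (int_Omega_letter _ _ _ Hcode).
  - intro n; destruct (Hw n) as [s [Hs Hagree]].
    replace (pref w n) with (pref s n)
      by (apply map_ext_in; intros i Hi%in_seq; apply Hagree; lia).
    apply pi_image_accepted; auto.
Qed.

Lemma Sigma_HC_iff w : Sigma_HC m a w <-> stack_shift m w.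
Proof. split; [apply Sigma_HC_stack_shift|apply stack_shift_Sigma_HC]. Qed.

End Dynamics.

Theorem proposition2p1 (m : nat) (a : R) :
  (2 <= m)%nat -> 0 < a -> a < 1 / INR m ->
  let S := Sigma_HC m a in
  (* every word over {1..m} is in L(Sigma), so Theta^xi is defined *)
  (forall xi : word, word_over_m m xi -> lang S xi) /\
  (* vertex set = { Theta^xi : xi word over {1..m} } *)
  (forall A : sequence -> Prop,
     fsg_vertex S A <->
     exists xi : word, word_over_m m xi /\ set_eq A (follower S xi)) /\
  (* the labeled edges are exactly the listed ones *)
  (forall (A : sequence -> Prop) (gamma : nat) (B : sequence -> Prop),
     fsg_edge S A gamma B <->
     ((exists (xi : word) (i : nat), word_over_m m xi /\ (1 <= i <= m)%nat /\
         gamma = i /\ set_eq A (follower S xi) /\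
         set_eq B (follower S (xi ++ i :: nil)))
      \/
      (exists (xi : word) (i : nat), word_over_m m xi /\ (1 <= i <= m)%nat /\
         gamma = (i + m)%nat /\ set_eq A (follower S (xi ++ i :: nil)) /\
         set_eq B (follower S xi))
      \/
      ((m + 1 <= gamma <= 2 * m)%nat /\
         set_eq A (follower S nil) /\ set_eq B (follower S nil)))).
Proof.
  intros Hm Ha Ham S.
  assert (HS : forall w, S w <-> stack_shift m w) by (apply Sigma_HC_iff; auto).
  assert (Hm0 : (0 < m)%nat) by lia.
  split; [|split].
  - apply (lang_word_over m Hm0 S HS).
  - apply (fsg_vertex_iff m Hm0 S HS).
  - apply (fsg_edge_iff m Hm0 S HS).
Qed.
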